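(* For all subsets $X_i, X_j \subseteq A$: if it is not the case that $X_j$ regulates $X_i$, then $X_i \leadsto X_j$.
   Context: Let $A$ be a finite set of agents. For each $a \in A$ let $S_a$ be a nonempty finite set, and let $S = \prod_{a \in A} S_a$ be the set of states; for $s \in S$ and $X \subseteq A$, $s|_X$ denotes the restriction of $s$ to the components in $X$ (extended elementwise to sets of states). For each $a \in A$ let $\to_a \subseteq S \times S$ be a relation that is either empty or left-total, such that whenever $s \to_a s'$, either $s = s'$ or $s$ and $s'$ differ only in the $a$-component. For $X \subseteq A$ let $\to_X = \bigcup_{a \in X} \to_a$ and $\to_X^*$ its reflexive-transitive closure; for $T \subseteq S$, $(T \to_X) = \{ t' : \exists t \in T,\ t \to_X t'\}$. Orbit operator: $\Omega_X(S') = \{ s' : \exists s \in S',\ s \to_X^* s'\}$. Equilibria operator: $\Psi_X(S') = \{ s \in \Omega_X(S') : \forall s' \in S,\ s \to_X^* s' \implies s' \to_X^* s \}$. $M$-relation: for $X, Y \subseteq A$, $X \leadsto Y$ iff for every $S' \subseteq S$, with $T = \Psi_X(\Psi_{X \cup Y}(S'))$, one has $(T \to_Y) \subseteq T$. Regulation: for $a_k, a_\ell \in A$, $a_k$ regulates $a_\ell$ iff there exist $s, s' \in S$ with $s|_{A \setminus \{a_k\}} = s'|_{A \setminus \{a_k\}}$ and $(\{s\} \to_{a_\ell})|_{\{a_\ell\}} \neq (\{s'\} \to_{a_\ell})|_{\{a_\ell\}}$. For $X, Y \subseteq A$, $X$ regulates $Y$ iff some $a_k \in X$ regulates some $a_\ell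 \in Y$. *)

From mathcomp Require Import all_boot.
Set Implicit Arguments. Unset Strict Implicit. Unset Printing Implicit Defensive.

Section Defs.
Variables (A : finType) (S : A -> finType).

Definition state := {dffun forall a : A, S a}.

Variable step : A -> rel state.

Definition stepX (X : {set A}) : rel state :=
  fun s t => [exists a in X, step a s t].

Definition Omega (X : {set A}) (S' : {set state}) : {set state} :=
  [set s' | [exists s in S', connect (stepX X) s s']].

Definition Psi (X : {set A}) (S' : {set state}) : {set state} :=
  [set s in Omega X S' |
     [forall s', connect (stepX X) s s' ==> connect (stepX X) s' s]].

Definition leadsto (X Y : {set A}) : Prop :=
  forall S' : {set state},
    let T := Psi X (Psi (X :|: Y) S') in
    forall t t', t \in T -> stepX Y t t' -> t' \in T.

Definition succ_comp (a : A) (s : state) : {set S a} :=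
  [set (t : state) a | t in [set t : state | step a s t]].

Definition regulates_agent (ak al : A) : Prop :=
  exists s s' : state,
    (forall b, b != ak -> s b = s' b) /\ succ_comp al s != succ_comp al s'.

Definition regulates (X Y : {set A}) : Prop :=
  exists ak al, [/\ ak \in X, al \in Y & regulates_agent ak al].

End Defs.

From mathcomp Require Import all_boot.

Set Implicit Arguments.
Unset Strict Implicit.
Unset Printing Implicit Defensive.

(* Let t be an Xi-equilibrium of the (Xi u Xj)-equilibria and t ->_b t' with
   b in Xj.  Equilibria of Xi u Xj are closed under Xi u Xj steps, so t' is
   still one of them.  If b is in Xi, t' is Xi-reachable from t and hence again
   an Xi-equilibrium.  Otherwise Xi-steps never change the b-component and,
   since b regulates no agent of Xi, they do not depend on it either: every
   Xi-run from t' is shadowed, up to the b-component, by one from t, and the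
   way back to t transfers to a way back to t'. *)

Section Reachability.
Variables (A : finType) (S : A -> finType) (step : A -> rel (state S)).

Definition recurrent (X : {set A}) (s : state S) :=
  forall u, connect (stepX step X) s u -> connect (stepX step X) u s.

Lemma stepX_sub (X Y : {set A}) : X \subset Y -> subrel (stepX step X) (stepX step Y).
Proof.
move=> sXY s u /existsP [a /andP [aX sau]].
by apply/existsP; exists a; rewrite sau (subsetP sXY).
Qed.

Lemma connect_stepX_sub (X Y : {set A}) s u : X \subset Y ->
  connect (stepX step X) s u -> connect (stepX step Y) s u.
Proof.
by move=> sXY; apply: connect_sub => x y xy; apply/connect1/(stepX_sub sXY).
Qed.

Lemma OmegaP X (S' : {set state S}) s :
  reflect (exists2 s0, s0 \in S' & connect (stepX step X) s0 s) (s \in Omega step X S').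
Proof. by rewrite inE; apply: (iffP exists_inP) => -[s0]; exists s0. Qed.

Lemma mem_Omega X (S' : {set state S}) s : s \in S' -> s \in Omega step X S'.
Proof. by move=> sS'; apply/OmegaP; exists s. Qed.

Lemma PsiP X (S' : {set state S}) s :
  reflect (s \in Omega step X S' /\ recurrent X s) (s \in Psi step X S').
Proof.
rewrite [s \in Psi _ _ _]inE; apply: (iffP andP) => -[sO rec]; split=> //.
  by move=> u; apply/implyP; move/forallP: rec.
by apply/forallP => u; apply/implyP => /rec.
Qed.

Lemma recurrent_connect X s u :
  recurrent X s -> connect (stepX step X) s u -> recurrent X u.
Proof.
move=> rec su v uv; apply: connect_trans (su).
exact/rec/(connect_trans su uv).
Qed.

Lemma Psi_connect_closed X (S' : {set state S}) s u : s \in Psi step X S' ->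
  connect (stepX step X) s u -> u \in Psi step X S'.
Proof.
case/PsiP=> /OmegaP [s0 s0S' s0s] rec su; apply/PsiP; split.
  by apply/OmegaP; exists s0; rewrite // (connect_trans s0s su).
exact: recurrent_connect rec su.
Qed.

End Reachability.

Section OffComponent.
Variables (A : finType) (S : A -> finType) (step : A -> rel (state S)).
Hypothesis step_local : forall (a : A) (s t : state S), step a s t ->
  s = t \/ (forall b : A, b != a -> s b = t b).

Definition eq_off (b : A) (s s' : state S) := forall c, c != b -> s c = s' c.

Lemma step_eq_off a s t : step a s t -> eq_off a s t.
Proof. by case/step_local=> [-> //|]. Qed.

Variables (X : {set A}) (b : A).
Hypothesis bNX : b \notin X.
Hypothesis b_not_read : forall a, a \in X -> forall s s',
  eq_off b s s' -> succ_comp step a s = succ_comp step a s'.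

Lemma stepX_eq_off_lift s s' u : eq_off b s s' -> stepX step X s u ->
  exists2 u', stepX step X s' u' & eq_off b u u'.
Proof.
move=> ss' /existsP [a /andP [aX sau]].
have ab : a != b by apply: contraNneq bNX => <-.
have : u a \in succ_comp step a s' by
  rewrite -(b_not_read aX ss'); apply/imsetP; exists u; rewrite ?inE.
case/imsetP=> w; rewrite inE => s'aw uw.
exists w; first by apply/existsP; exists a; rewrite aX.
move=> c cb; have [-> //|ca] := eqVneq c a.
by rewrite -(step_eq_off sau ca) -(step_eq_off s'aw ca) ss'.
Qed.

Lemma connect_eq_off_lift s s' u : eq_off b s s' -> connect (stepX step X) s u ->
  exists2 u', connect (stepX step X) s' u' & eq_off b u u'.
Proof.
move=> ss' /connectP [p]; elim: p s s' ss' => [|x p IH] s s' ss' /=.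
  by move=> _ ->; exists s'.
case/andP=> sx px ux.
have [x' s'x' xx'] := stepX_eq_off_lift ss' sx.
have [u' x'u' uu'] := IH _ _ xx' px ux.
by exists u' => //; apply: connect_trans x'u'; apply: connect1.
Qed.

Lemma connect_stepX_comp s u : connect (stepX step X) s u -> s b = u b.
Proof.
move=> /connectP [p]; elim: p s => [|x p IH] s /=; first by move=> _ ->.
case/andP=> /exists_inP [a aX sax] px ux.
rewrite (step_eq_off sax); last by apply: contraNneq bNX => ->.
exact: IH px ux.
Qed.

Lemma recurrent_eq_off t t' : recurrent step X t -> eq_off b t t' ->
  recurrent step X t'.
Proof.
move=> rec tt' s' t's'.
have t't c : c != b -> t' c = t c by move=> cb; rewrite tt'.
have [u tu s'u] := connect_eq_off_lift t't t's'.
have us' c : c != b -> u c = s' c by move=> cb; rewrite s'u.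
have [w s'w tw] := connect_eq_off_lift us' (rec u tu).
suff -> : t' = w by [].
apply/ffunP=> c; have [->|cb] := eqVneq c b.
  by rewrite (connect_stepX_comp t's') (connect_stepX_comp s'w).
by rewrite t't // tw.
Qed.

End OffComponent.

Theorem lemma1 (A : finType) (S : A -> finType)
  (HSne : forall a : A, 0 < #|S a|)
  (step : A -> rel (state S))
  (Hempty_or_total : forall a : A,
     (forall s t, ~~ step a s t) \/ (forall s, exists t, step a s t))
  (Hlocal : forall (a : A) (s t : state S), step a s t ->
     s = t \/ (forall b : A, b != a -> s b = t b))
  (Xi Xj : {set A}) :
  ~ regulates step Xj Xi -> leadsto step Xi Xj.
Proof.
move=> Hnreg S' T t t' tT /exists_inP [b bXj tbt'].
have /PsiP [/OmegaP [p pP pt] rec_t] := tT.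
have t'P : t' \in Psi step (Xi :|: Xj) S'.
  apply: Psi_connect_closed pP _; apply: connect_trans.
    exact: connect_stepX_sub (subsetUl _ _) pt.
  by apply: connect1; apply/exists_inP; exists b; rewrite // inE bXj orbT.
apply/PsiP; split; first exact: mem_Omega.
have [bXi | bNXi] := boolP (b \in Xi).
  by apply: recurrent_connect rec_t _; apply/connect1/exists_inP; exists b.
have b_not_read a : a \in Xi -> forall s s', eq_off b s s' ->
    succ_comp step a s = succ_comp step a s'.
  move=> aXi s s' ss'; apply/eqP/negPn/negP => ne.
  by apply: Hnreg; exists b, a; split => //; exists s, s'.
exact: (recurrent_eq_off Hlocal bNXi b_not_read rec_t (step_eq_off Hlocal tbt')).
Qed.
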